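(* Let $\mathcal{S}=(\mathscr{X},\nabla_{\mathcal{S}})$ be a non-commutative spacetime, $\mathscr{Y}$ a quantale, and $f:\mathscr{X}\to\mathscr{Y}$ a join-preserving strict monoidal order embedding with left adjoint $f_!:\mathscr{Y}\to\mathscr{X}$, and let $\nabla=f\circ\nabla_{\mathcal{S}}\circ f_!:\mathscr{Y}\to\mathscr{Y}$. If $\mathcal{S}$ satisfies $(wF)$ then so does $(\mathscr{Y},\nabla)$, and if $\mathcal{S}$ satisfies $(F)$ then so does $(\mathscr{Y},\nabla)$.
   Context: A quantale is a monoidal poset (monoid with multiplication monotone in each argument) having all joins, with multiplication distributing over arbitrary joins in each argument. A non-commutative spacetime is $(\mathscr{X},\nabla)$ with $\mathscr{X}$ a quantale and $\nabla$ join preserving and oplax monoidal ($\nabla e\le e$, $\nabla(a\otimes b)\le\nabla a\otimes\nabla b$). Strict monoidal: $f(e)=e$, $f(a\otimes b)=f(a)\otimes f(b)$; order embedding: $f(a)\le f(b)$ implies $a\le b$; $f_!$ left adjoint: $f_!(y)\le x$ iff $y\le f(x)$. A pair $(\mathscr{Z},\nabla)$ satisfies $(F)$ if $a\le\nabla a$ for all $a$, and $(wF)$ if $\nabla a=0$ (least element) implies $a=0$. *)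

Record Quantale := {
  qcar :> Type;
  qle : qcar -> qcar -> Prop;
  qle_refl : forall a, qle a a;
  qle_trans : forall a b c, qle a b -> qle b c -> qle a c;
  qle_antisym : forall a b, qle a b -> qle b a -> a = b;
  qmul : qcar -> qcar -> qcar;
  qunit : qcar;
  qmulA : forall a b c, qmul a (qmul b c) = qmul (qmul a b) c;
  qmul1l : forall a, qmul qunit a = a;
  qmul1r : forall a, qmul a qunit = a;
  qmul_monol : forall a a' b, qle a a' -> qle (qmul a b) (qmul a' b);
  qmul_monor : forall a b b', qle b b' -> qle (qmul a b) (qmul a b');
  qsup : (qcar -> Prop) -> qcar;
  qsup_ub : forall (S : qcar -> Prop) a, S a -> qle a (qsup S);
  qsup_least : forall (S : qcar -> Prop) b,
      (forall a, S a -> qle a b) -> qle (qsup S) b;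
  qmul_supl : forall (S : qcar -> Prop) b,
      qmul (qsup S) b = qsup (fun c => exists a, S a /\ c = qmul a b);
  qmul_supr : forall a (S : qcar -> Prop),
      qmul a (qsup S) = qsup (fun c => exists b, S b /\ c = qmul a b)
}.

Arguments qle {q}.
Arguments qmul {q}.
Arguments qunit {q}.
Arguments qsup {q}.

Definition qbot (X : Quantale) : X := qsup (fun _ : X => False).

Definition join_preserving {X Y : Quantale} (f : X -> Y) : Prop :=
  forall S : X -> Prop, f (qsup S) = qsup (fun y => exists x, S x /\ y = f x).

Definition oplax_monoidal {X : Quantale} (n : X -> X) : Prop :=
  qle (n qunit) qunit /\ forall a b, qle (n (qmul a b)) (qmul (n a) (n b)).

Definition noncomm_spacetime (X : Quantale) (n : X -> X) : Prop :=
  join_preserving n /\ oplax_monoidal n.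

Definition strict_monoidal {X Y : Quantale} (f : X -> Y) : Prop :=
  f qunit = qunit /\ forall a b, f (qmul a b) = qmul (f a) (f b).

Definition order_embedding {X Y : Quantale} (f : X -> Y) : Prop :=
  forall a b, qle (f a) (f b) -> qle a b.

Definition left_adjoint {X Y : Quantale} (g : Y -> X) (f : X -> Y) : Prop :=
  forall y x, qle (g y) x <-> qle y (f x).

Definition condF (Z : Quantale) (n : Z -> Z) : Prop := forall a, qle a (n a).

Definition condwF (Z : Quantale) (n : Z -> Z) : Prop :=
  forall a, n a = qbot Z -> a = qbot Z.

(* Both conditions transfer along the adjunction [f_! -| f]: the unit
   [y <= f (f_! y)] composed with the monotone [f] carries [a <= nabla a] over,
   and for (wF), [f] reflects the bottom element because it is injective and,
   being join-preserving, maps bottom to bottom. *)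


Lemma qbot_le (Z : Quantale) (a : Z) : qle (qbot Z) a.
Proof. apply qsup_least. intros _ []. Qed.

Lemma qle_bot (Z : Quantale) (a : Z) : qle a (qbot Z) -> a = qbot Z.
Proof. intro H. apply qle_antisym; [exact H | apply qbot_le]. Qed.

Lemma join_preserving_bot (X Y : Quantale) (f : X -> Y) :
  join_preserving f -> f (qbot X) = qbot Y.
Proof.
  intro Hjoin. apply qle_bot. unfold qbot at 1. rewrite Hjoin.
  apply qsup_least. intros y [x [[] _]].
Qed.

Lemma order_embedding_inj (X Y : Quantale) (f : X -> Y) :
  order_embedding f -> forall a b, f a = f b -> a = b.
Proof.
  intros Hemb a b E.
  apply qle_antisym; apply Hemb; rewrite E; apply qle_refl.
Qed.

Section Adjunction.

Variables (X Y : Quantale) (f : X -> Y) (g : Y -> X).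
Hypothesis adj : left_adjoint g f.

Lemma left_adjoint_unit (y : Y) : qle y (f (g y)).
Proof. apply adj, qle_refl. Qed.

Lemma left_adjoint_counit (x : X) : qle (g (f x)) x.
Proof. apply adj, qle_refl. Qed.

Lemma right_adjoint_mono (x x' : X) : qle x x' -> qle (f x) (f x').
Proof.
  intro H. apply adj. exact (qle_trans _ _ _ _ (left_adjoint_counit x) H).
Qed.

Lemma condF_conjugate (n : X -> X) :
  condF X n -> condF Y (fun y => f (n (g y))).
Proof.
  intros HF y. apply (qle_trans _ _ _ _ (left_adjoint_unit y)).
  apply right_adjoint_mono, HF.
Qed.

Lemma condwF_conjugate (n : X -> X) :
  order_embedding f -> f (qbot X) = qbot Y ->
  condwF X n -> condwF Y (fun y => f (n (g y))).
Proof.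
  intros Hemb Hbot HwF y Hy.
  assert (Hgy : g y = qbot X).
  { apply HwF, (order_embedding_inj _ _ f Hemb). now rewrite Hbot. }
  apply qle_bot. rewrite <- Hbot, <- Hgy. apply left_adjoint_unit.
Qed.

End Adjunction.

Theorem lemma8p9 (X Y : Quantale) (nablaS : X -> X) (f : X -> Y) (f_ : Y -> X)
  (HS : noncomm_spacetime X nablaS)
  (Hjoin : join_preserving f) (Hmon : strict_monoidal f)
  (Hemb : order_embedding f) (Hadj : left_adjoint f_ f) :
  (condwF X nablaS -> condwF Y (fun y => f (nablaS (f_ y)))) /\
  (condF X nablaS -> condF Y (fun y => f (nablaS (f_ y)))).
Proof.
  split.
  - apply condwF_conjugate; [exact Hadj | exact Hemb |].
    exact (join_preserving_bot X Y f Hjoin).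
  - apply condF_conjugate, Hadj.
Qed.
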